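(* Let $T\subseteq\mathbb{P}^{\circ}$ and let $\mathsf{X},\mathsf{Y}$ be proper intermediate temporal logics with $\mathsf{X}\subseteq\mathsf{Y}$. For every temporal theory $\Gamma$, if $T$ is an $\mathsf{X}$-temporal safe belief set of $\Gamma$, then $T$ is a $\mathsf{Y}$-temporal safe belief set of $\Gamma$.
   Context: Fix a countable set $\mathbb{P}$ of atoms. Temporal formulas: $\varphi ::= p\mid\bot\mid\varphi\wedge\varphi\mid\varphi\vee\varphi\mid\varphi\to\varphi\mid\circ\varphi\mid\varphi\,\mathsf{U}\,\varphi\mid\varphi\,\mathsf{R}\,\varphi$; $\neg\varphi:=\varphi\to\bot$, $\Box\varphi:=\bot\,\mathsf{R}\,\varphi$, $\circ^0\varphi:=\varphi$, $\circ^{i+1}\varphi:=\circ\circ^i\varphi$. An intuitionistic temporal frame is $(W,\preccurlyeq,S)$ with $W\ne\emptyset$, $\preccurlyeq$ a partial order, $S:W\to W$ with forward confluence ($w\preccurlyeq v\Rightarrow S(w)\preccurlyeq S(v)$); persistent if also backward confluent (if $S(w)=v\preccurlyeq u$ then some $t\succcurlyeq w$ has $S(t)=u$). A model adds $V:W\to2^{\mathbb{P}}$ monotone along $\preccurlyeq$. Satisfaction: $p$ via $V$; $\bot$ never; $\wedge,\vee$ pointwise; $M,w\models\varphi\to\psi$ iff for all $v\succcurlyeq w$, $M,v\models\varphi$ implies $M,v\models\psi$; $\circ\varphi$ at $w$ iff $\varphi$ at $S(w)$; $\varphi\,\mathsf{U}\,\psi$: some $k\ge0$ with $\psi$ at $S^k(w)$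 and $\varphi$ at $S^i(w)$ for all $0\le i<k$; $\varphi\,\mathsf{R}\,\psi$: for all $k\ge0$, $\psi$ at $S^k(w)$ or $\varphi$ at some $S^i(w)$, $0\le i<k$. Depth $\le n$: no chain of $n+1$ pairwise distinct $\preccurlyeq$-related worlds. $\mathrm{ITL}^{\mathrm{BD}_n}$: formulas true at every world of every model on a persistent frame of depth $\le n$; $\mathrm{LTL}:=\mathrm{ITL}^{\mathrm{BD}_1}$. An intermediate temporal logic is a set $\mathsf{X}$ with $\mathrm{ITL}^{\mathrm{BD}_n}\subseteq\mathsf{X}\subseteq\mathrm{LTL}$ for some $n\ge1$, closed under modus ponens, necessitation ($\psi\in\mathsf{X}\Rightarrow\circ\psi,\Box\psi\in\mathsf{X}$) and uniform substitution; it is proper if $\mathsf{X}\ne\mathrm{LTL}$. $\mathsf{X}$-models: models on persistent frames of depth $\le n$ validating all of $\mathsf{X}$ (for $\mathsf{X}=\mathrm{THT}$, the models on the frame $\mathbb{N}\times\{0,1\}$ with $(i,h)\preccurlyeq(j,t)$ iff $i=j,h\le t$ and $S((i,k))=(i+1,k)$). $\Gamma$ is $\mathsf{X}$-consistent if some $\mathsf{X}$-model satisfies all of $\Gamma$ at some world; $\Gamma\models_{\mathsf{X}}\Delta$: every $\mathsf{X}$-model and world satisfying all of $\Gamma$ satisfies all of $\Delta$. $\mathbb{P}^{\circ}:=\{\circ^ip\mid p\in\mathbb{P},i\ge0\}$. $T\subseteq\mathbb{P}^{\circ}$ is an $\mathsf{X}$-temporal safe belief set of $\Gamma$ if $\Sigma_T:=\Gamma\cup\{\circ^i\neg\neg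 p\mid\circ^ip\in T\}\cup\{\circ^i\neg p\mid\circ^ip\notin T\}$ is $\mathsf{X}$-consistent and $\Sigma_T\models_{\mathsf{X}}T$. *)

From Stdlib Require Import Arith.

Inductive formula : Type :=
| Atom : nat -> formula
| Bot : formula
| And : formula -> formula -> formula
| Or : formula -> formula -> formula
| Imp : formula -> formula -> formula
| Next : formula -> formula
| Until : formula -> formula -> formula
| Release : formula -> formula -> formula.

Definition Neg (phi : formula) : formula := Imp phi Bot.
Definition Box (phi : formula) : formula := Release Bot phi.
Fixpoint nexts (i : nat) (phi : formula) : formula :=
  match i with 0 => phi | S k => Next (nexts k phi) end.

Fixpoint subst (s : nat -> formula) (phi : formula) : formula :=
  match phi with
  | Atom p => s p
  | Bot => Bot
  | And a b => And (subst s a) (subst s b)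
  | Or a b => Or (subst s a) (subst s b)
  | Imp a b => Imp (subst s a) (subst s b)
  | Next a => Next (subst s a)
  | Until a b => Until (subst s a) (subst s b)
  | Release a b => Release (subst s a) (subst s b)
  end.

Record frame : Type := Frame {
  fW : Type;
  fle : fW -> fW -> Prop;
  fS : fW -> fW }.

Definition is_persistent_frame (F : frame) : Prop :=
  inhabited (fW F) /\
  (forall w, fle F w w) /\
  (forall u v w, fle F u v -> fle F v w -> fle F u w) /\
  (forall u v, fle F u v -> fle F v u -> u = v) /\
  (forall w v, fle F w v -> fle F (fS F w) (fS F v)) /\
  (forall w u, fle F (fS F w) u -> exists t, fle F w t /\ fS F t = u).

Definition depth_le (F : frame) (n : nat) : Prop :=
  ~ exists c : nat -> fW F,
      forall i j, i < j -> j <= n -> fle F (c i) (c j) /\ c i <> c j.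

Definition valuation (F : frame) := fW F -> nat -> Prop.

Definition monotone_val (F : frame) (V : valuation F) : Prop :=
  forall w v p, fle F w v -> V w p -> V v p.

Fixpoint iterS (F : frame) (k : nat) (w : fW F) : fW F :=
  match k with 0 => w | S k' => fS F (iterS F k' w) end.

Fixpoint sat (F : frame) (V : valuation F) (w : fW F) (phi : formula) : Prop :=
  match phi with
  | Atom p => V w p
  | Bot => False
  | And a b => sat F V w a /\ sat F V w b
  | Or a b => sat F V w a \/ sat F V w b
  | Imp a b => forall v, fle F w v -> sat F V v a -> sat F V v b
  | Next a => sat F V (fS F w) a
  | Until a b => exists k, sat F V (iterS F k w) b /\
                   forall i, i < k -> sat F V (iterS F i w) a
  | Release a b => forall k, sat F V (iterS F k w) b \/
                   exists i, i < k /\ sat F V (iterS F i w) a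
  end.

Definition ITL_BD (n : nat) (phi : formula) : Prop :=
  forall (F : frame) (V : valuation F), is_persistent_frame F -> depth_le F n ->
    monotone_val F V -> forall w, sat F V w phi.

Definition LTL : formula -> Prop := ITL_BD 1.

Definition intermediate_temporal_logic (X : formula -> Prop) : Prop :=
  (exists n, 1 <= n /\ (forall phi, ITL_BD n phi -> X phi)) /\
  (forall phi, X phi -> LTL phi) /\
  (forall phi psi, X phi -> X (Imp phi psi) -> X psi) /\
  (forall psi, X psi -> X (Next psi) /\ X (Box psi)) /\
  (forall (s : nat -> formula) phi, X phi -> X (subst s phi)).

Definition proper_itl (X : formula -> Prop) : Prop :=
  intermediate_temporal_logic X /\ ~ (forall phi, X phi <-> LTL phi).

Definition frame_validates (F : frame) (X : formula -> Prop) : Prop :=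
  forall (V : valuation F), monotone_val F V -> forall w phi, X phi -> sat F V w phi.

Definition X_model (X : formula -> Prop) (F : frame) (V : valuation F) : Prop :=
  (exists n, 1 <= n /\ (forall phi, ITL_BD n phi -> X phi) /\ depth_le F n) /\
  is_persistent_frame F /\ monotone_val F V /\ frame_validates F X.

Definition X_consistent (X : formula -> Prop) (G : formula -> Prop) : Prop :=
  exists (F : frame) (V : valuation F) (w : fW F),
    X_model X F V /\ forall phi, G phi -> sat F V w phi.

Definition X_entails (X : formula -> Prop) (G D : formula -> Prop) : Prop :=
  forall (F : frame) (V : valuation F) (w : fW F),
    X_model X F V -> (forall phi, G phi -> sat F V w phi) ->
    forall phi, D phi -> sat F V w phi.

Definition in_Pcirc (phi : formula) : Prop := exists i p, phi = nexts i (Atom p).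

Definition Sigma_T (G T : formula -> Prop) : formula -> Prop := fun phi =>
  G phi \/
  (exists i p, T (nexts i (Atom p)) /\ phi = nexts i (Neg (Neg (Atom p)))) \/
  (exists i p, ~ T (nexts i (Atom p)) /\ phi = nexts i (Neg (Atom p))).

Definition temporal_safe_belief_set (X G T : formula -> Prop) : Prop :=
  X_consistent X (Sigma_T G T) /\ X_entails X (Sigma_T G T) T.

(* Consistency: an X-model of Sigma_T has finite depth, so above the world satisfying
   Sigma_T there is a maximal world, where Sigma_T still holds by persistence.  By
   backward confluence the successors of a maximal world are maximal, so its orbit is an
   LTL model, i.e. a model on the frame (nat, =, S); as Y is contained in LTL this is a
   Y-model.  Entailment: since X is contained in Y, every Y-model is an X-model, so every
   X-consequence of Sigma_T is a Y-consequence. *)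
From Stdlib Require Import Arith Lia Classical.

Definition strict_chain (F : frame) (c : nat -> fW F) (n : nat) : Prop :=
  forall i j, i < j -> j <= n -> fle F (c i) (c j) /\ c i <> c j.

Lemma depth_le_mono (F : frame) (n m : nat) : n <= m -> depth_le F n -> depth_le F m.
Proof. intros Hnm Hd [c Hc]. apply Hd. exists c. intros i j Hij Hj. apply Hc; lia. Qed.

Lemma ITL_BD_antitone (n m : nat) (phi : formula) : n <= m -> ITL_BD m phi -> ITL_BD n phi.
Proof. intros Hnm H F V HF Hd HV w. apply H; eauto using depth_le_mono. Qed.

Lemma iterS_add (F : frame) (k m : nat) (w : fW F) :
  iterS F k (iterS F m w) = iterS F (k + m) w.
Proof. induction k; simpl; congruence. Qed.

Section PersistentFrame.

Variable F : frame.
Hypothesis HF : is_persistent_frame F.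

Lemma fle_refl w : fle F w w.
Proof. apply HF. Qed.

Lemma fle_trans u v w : fle F u v -> fle F v w -> fle F u w.
Proof. apply HF. Qed.

Lemma fle_antisym u v : fle F u v -> fle F v u -> u = v.
Proof. apply HF. Qed.

Lemma fle_S u v : fle F u v -> fle F (fS F u) (fS F v).
Proof. apply HF. Qed.

Lemma fle_S_back w u : fle F (fS F w) u -> exists t, fle F w t /\ fS F t = u.
Proof. apply HF. Qed.

Lemma fle_iterS k u v : fle F u v -> fle F (iterS F k u) (iterS F k v).
Proof. induction k; simpl; auto using fle_S. Qed.

Lemma sat_persistent V : monotone_val F V ->
  forall phi w v, fle F w v -> sat F V w phi -> sat F V v phi.
Proof.
  intros HV phi; induction phi; simpl; intros w v Hwv H.
  - eauto.
  - exact H.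
  - destruct H; eauto.
  - destruct H; eauto.
  - intros x Hvx; apply H; eauto using fle_trans.
  - eauto using fle_S.
  - destruct H as [k [Hk Hbefore]]. exists k.
    split; eauto using fle_iterS.
  - intros k; destruct (H k) as [Hk | [i [Hik Hi]]].
    + left; eauto using fle_iterS.
    + right; exists i; split; eauto using fle_iterS.
Qed.

Definition maximal (u : fW F) : Prop := forall v, fle F u v -> v = u.

Lemma maximal_S u : maximal u -> maximal (fS F u).
Proof.
  intros Hu v Hv. destruct (fle_S_back _ _ Hv) as [t [Ht <-]].
  rewrite (Hu t Ht). reflexivity.
Qed.

Lemma maximal_iterS k u : maximal u -> maximal (iterS F k u).
Proof. induction k; simpl; auto using maximal_S. Qed.

Lemma strict_chain_snoc c k v :
  strict_chain F c k -> fle F (c k) v -> v <> c k ->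
  strict_chain F (fun m => if m <=? k then c m else v) (S k).
Proof.
  intros Hc Hv Hne i j Hij Hj.
  replace (i <=? k) with true by (symmetry; apply Nat.leb_le; lia).
  destruct (j <=? k) eqn:Ej; [apply Nat.leb_le in Ej; auto |].
  destruct (Nat.eq_dec i k) as [-> | Hik]; [auto |].
  destruct (Hc i k ltac:(lia) ltac:(lia)) as [Hle Hdiff].
  split; [eauto using fle_trans |].
  (* c i = v would squeeze c k between c i and v *)
  intro Heq. subst v. apply Hdiff, fle_antisym; auto.
Qed.

Lemma exists_maximal_above n : depth_le F n -> forall w, exists u, fle F w u /\ maximal u.
Proof.
  intros Hd w. apply NNPP; intro Hnone.
  assert (Hgrow : forall u, fle F w u -> exists v, fle F u v /\ v <> u).
  { intros u Hwu. apply NNPP; intro Hmax. apply Hnone. exists u; split; [exact Hwu |].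
    intros v Huv. apply NNPP; intro Hne. apply Hmax. eauto. }
  assert (Hchains : forall k, exists c, fle F w (c k) /\ strict_chain F c k).
  { induction k as [| k [c [Hwc Hc]]].
    - exists (fun _ => w). split; [apply fle_refl | intros i j; lia].
    - destruct (Hgrow _ Hwc) as [v [Hv Hne]].
      exists (fun m => if m <=? k then c m else v). split.
      + rewrite (proj2 (Nat.leb_gt (S k) k) (Nat.lt_succ_diag_r k)).
        eauto using fle_trans.
      + apply strict_chain_snoc; assumption. }
  destruct (Hchains n) as [c [_ Hc]]. apply Hd. exists c. exact Hc.
Qed.

End PersistentFrame.

Definition nat_frame : frame := Frame nat (@eq nat) S.

Lemma iterS_nat_frame k m : iterS nat_frame k m = k + m.
Proof. induction k; simpl; auto. Qed.

Lemma nat_frame_persistent : is_persistent_frame nat_frame.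
Proof.
  repeat split; simpl; try congruence.
  - exact 0.
  - intros w u H. exists w. auto.
Qed.

Lemma nat_frame_depth_le n : 1 <= n -> depth_le nat_frame n.
Proof. intros Hn [c Hc]. destruct (Hc 0 1 ltac:(lia) Hn) as [Heq Hne]. exact (Hne Heq). Qed.

Lemma nat_frame_monotone (V : valuation nat_frame) : monotone_val nat_frame V.
Proof. intros w v p Hwv. simpl in Hwv. subst. auto. Qed.

Lemma X_model_nat_frame (Y : formula -> Prop) (V : valuation nat_frame) :
  intermediate_temporal_logic Y -> X_model Y nat_frame V.
Proof.
  intros [[n [Hn HnY]] [HYLTL _]].
  split; [exists n; auto using nat_frame_depth_le |].
  split; [exact nat_frame_persistent |].
  split; [apply nat_frame_monotone |].
  intros V' HV' w phi Hphi.
  apply (HYLTL phi Hphi); auto using nat_frame_persistent, nat_frame_depth_le.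
Qed.

(* On the orbit of a maximal world the order is trivial, so it is a model on [nat_frame]. *)
Lemma sat_orbit (F : frame) (HF : is_persistent_frame F) (V : valuation F) (u : fW F) :
  maximal F u -> forall phi m,
  sat nat_frame (fun m p => V (iterS F m u) p) m phi <-> sat F V (iterS F m u) phi.
Proof.
  intros Hu phi; induction phi; intro m; simpl; try tauto.
  - rewrite IHphi1, IHphi2; tauto.
  - rewrite IHphi1, IHphi2; tauto.
  - split.
    + intros H v Hv. rewrite (maximal_iterS F HF m u Hu v Hv).
      rewrite <- IHphi1, <- IHphi2. auto.
    + intros H v <-. rewrite IHphi1, IHphi2. apply H, fle_refl, HF.
  - apply IHphi.
  - setoid_rewrite iterS_nat_frame. setoid_rewrite IHphi1. setoid_rewrite IHphi2.
    setoid_rewrite iterS_add. tauto.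
  - setoid_rewrite iterS_nat_frame. setoid_rewrite IHphi1. setoid_rewrite IHphi2.
    setoid_rewrite iterS_add. tauto.
Qed.

Lemma X_consistent_intermediate (X Y G : formula -> Prop) :
  intermediate_temporal_logic Y -> X_consistent X G -> X_consistent Y G.
Proof.
  intros HY (F & V & w & [[n [_ [_ Hd]]] [HF [HV _]]] & HG).
  destruct (exists_maximal_above F HF n Hd w) as [u [Hwu Hu]].
  exists nat_frame, (fun m p => V (iterS F m u) p), 0.
  split; [apply X_model_nat_frame, HY |].
  intros phi Hphi. apply (sat_orbit F HF V u Hu phi 0).
  eapply sat_persistent; eauto.
Qed.

Lemma X_model_sublogic (X Y : formula -> Prop) (F : frame) (V : valuation F) :
  (exists n, 1 <= n /\ forall phi, ITL_BD n phi -> X phi) ->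
  (forall phi, X phi -> Y phi) ->
  X_model Y F V -> X_model X F V.
Proof.
  intros [nX [HnX HX]] HXY [[n [Hn [_ Hd]]] [HF [HV Hval]]].
  split; [| split; [exact HF | split; [exact HV |]]].
  - exists (Nat.max n nX). repeat split; [lia | |].
    + intros phi Hphi. apply HX. eapply ITL_BD_antitone; [| exact Hphi]. lia.
    + eapply depth_le_mono; [| exact Hd]. lia.
  - intros V' HV' w' phi Hphi. apply Hval; auto.
Qed.

Lemma X_entails_sublogic (X Y G D : formula -> Prop) :
  (exists n, 1 <= n /\ forall phi, ITL_BD n phi -> X phi) ->
  (forall phi, X phi -> Y phi) ->
  X_entails X G D -> X_entails Y G D.
Proof. intros HX HXY Hent F V w HM. apply Hent. eapply X_model_sublogic; eauto. Qed.

Theorem lemma5p4 (T : formula -> Prop) (X Y : formula -> Prop) :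
  (forall phi, T phi -> in_Pcirc phi) ->
  proper_itl X -> proper_itl Y ->
  (forall phi, X phi -> Y phi) ->
  forall Gamma : formula -> Prop,
    temporal_safe_belief_set X Gamma T -> temporal_safe_belief_set Y Gamma T.
Proof.
  intros _ [[HX_BD _] _] [HY _] HXY Gamma [Hcons Hent].
  split.
  - exact (X_consistent_intermediate X Y _ HY Hcons).
  - exact (X_entails_sublogic X Y _ _ HX_BD HXY Hent).
Qed.
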